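(* Let $n\in\mathbb N$ and let $\mathfrak S$ be as below. Then: (1) $\mathfrak S$ is a $\mathbb C$-algebra with respect to termwise addition and the multiplication given by the Leibniz rule, $\big(\sum_{\underline k}a_{\underline k}\underline\partial^{\underline k}\big)\cdot\big(\sum_{\underline l}b_{\underline l}\underline\partial^{\underline l}\big)=\sum_{\underline k,\underline l}\sum_{\underline 0\le\underline i\le\underline k}\binom{k_1}{i_1}\cdots\binom{k_n}{i_n}a_{\underline k}\frac{\partial^{|\underline i|}b_{\underline l}}{\partial x_1^{i_1}\cdots\partial x_n^{i_n}}\underline\partial^{\underline k+\underline l-\underline i}$ (which is well defined on $\mathfrak S$); in particular $\mathfrak S$ contains $\mathfrak D=\mathbb C[[x_1,\dots,x_n]][\partial_1,\dots,\partial_n]$ as a subalgebra; (2) the map $\sum_{\underline k}a_{\underline k}\underline\partial^{\underline k}\mapsto\sum_{\underline k}a_{\underline k}(0)\underline\partial^{\underline k}$ induces an isomorphism of $\mathbb C$-vector spaces $\mathfrak S/\mathfrak m\mathfrak S\to\mathbb C[\partial_1,\dots,\partial_n]$; (3) there is a natural injective algebra homomorphism $\mathfrak S\to\operatorname{End}^{\mathrm c}_{\mathbb C}(\widehat B)$ into the algebra of $\mathbb C$-linear endomorphisms of $\widehat B$ continuous in the $\mathfrak m$-adic topology; it makes $\widehat B$ a left $\mathfrak S$-module extending the natural left $\mathfrak D$-module structure.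
   Context: $\widehat B=\mathbb C[[x_1,\dots,x_n]]$, $\mathfrak m=(x_1,\dots,x_n)$, $\upsilon$ the $\mathfrak m$-adic valuation on $\widehat B$. Multi-indices $\underline k\in\mathbb N_0^n$, $\underline\partial^{\underline k}=\partial_1^{k_1}\cdots\partial_n^{k_n}$, $|\underline k|=k_1+\dots+k_n$. For a formal sum $P=\sum_{\underline k\ge\underline 0}a_{\underline k}\underline\partial^{\underline k}$ with $a_{\underline k}\in\widehat B$, its order is $o(P)=\sup\{|\underline k|-\upsilon(a_{\underline k})\}\in\mathbb Z\cup\{\infty\}$, and $\mathfrak S=\{P:o(P)<\infty\}$. *)

From HB Require Import structures.
From mathcomp Require Import all_boot all_order all_algebra.
From mathcomp Require Import boolp classical_sets functions cardinality fsbigop reals.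
From mathcomp Require Import complex.
From mathcomp Require Export mpoly.

Set Implicit Arguments.
Unset Strict Implicit.
Unset Printing Implicit Defensive.
Import Order.TTheory GRing.Theory Num.Theory.
Local Open Scope ring_scope.

(* Multi-indices are the monomials 'X_{1..n} of multinomials:
   k i = k_i,  mdeg k = |k|,  (i <= k)%MM componentwise,
   (k + l)%MM, (k - l)%MM (componentwise, truncated), U_(t) = t-th unit.

   A formal power series f in B^ = K[[x_1,...,x_n]] is represented by its
   coefficient family  f : 'X_{1..n} -> K  (f j = coefficient of x^j).
   NB: the pointwise product on functions is NEVER used; the product of
   power series is [smul] below. *)
Definition series (K : fieldType) (n : nat) := 'X_{1..n} -> K^o.

(* A formal sum  P = sum_k a_k d^k  is represented by its coefficient
   family  P : 'X_{1..n} -> series  (P k = a_k).  Termwise addition and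
   scalar multiplication are the pointwise ones. *)
Definition fsdo (K : fieldType) (n : nat) := 'X_{1..n} -> series K n.

Section Defs.
Variables (K : fieldType) (n : nat).
Implicit Types (f g : series K n) (P Q : fsdo K n).

Definition sone : series K n := fun j => (j == 0%MM)%:R.
Definition svar (t : 'I_n) : series K n := fun j => (j == U_(t)%MM)%:R.

Definition smul f g : series K n :=
  fun j => \sum_(p \in [set p : 'X_{1..n} | (p <= j)%MM]) f p * g (j - p)%MM.

Definition pderiv (t : 'I_n) f : series K n :=
  fun q => (q t).+1%:R * f (q + U_(t))%MM.

Definition sderiv (i : 'X_{1..n}) f : series K n :=
  fun q => (\prod_(t < n) ((q t + i t) ^_ (i t)))%:R * f (q + i)%MM.

(* upsilon(f) >= m  (m-adic valuation; upsilon(0) = +oo) *)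
Definition val_ge f (m : int) : Prop :=
  forall j : 'X_{1..n}, (mdeg j)%:Z < m -> f j = 0.

Definition in_m f : Prop :=
  exists g : 'I_n -> series K n, f = \sum_(t < n) smul (svar t) (g t).

(* o(P) = sup_k (|k| - upsilon(a_k)) < oo *)
Definition in_S P : Prop :=
  exists N : int, forall k, val_ge (P k) ((mdeg k)%:Z - N).

Definition in_D P : Prop := finite_set [set k | P k != 0].

Definition done : fsdo K n := fun k => if k == 0%MM then sone else 0.
Definition dcoef f : fsdo K n := fun k => if k == 0%MM then f else 0.
Definition dpart (t : 'I_n) : fsdo K n :=
  fun k => if k == U_(t)%MM then sone else 0.

Definition mbinom (k i : 'X_{1..n}) : nat := \prod_(t < n) 'C(k t, i t).

(* Leibniz product: the term of index (k, i) contributing to d^m,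
   where l = m - (k - i) (i.e. m = k + l - i), needs i <= k, k - i <= m *)
Definition lterm P Q (m k i : 'X_{1..n}) : series K n :=
  (mbinom k i)%:R *: smul (P k) (sderiv i (Q (m - (k - i))%MM)).

Definition lrange (m k : 'X_{1..n}) : set 'X_{1..n} :=
  [set i | (i <= k)%MM && (k - i <= m)%MM].

Definition dmul P Q : fsdo K n :=
  fun m j => \sum_(k \in [set: 'X_{1..n}])
               \sum_(i \in lrange m k) lterm P Q m k i j.

Definition dmul_welldef P Q : Prop :=
  forall m j, finite_set [set k | exists2 i, i \in lrange m k &
                                     lterm P Q m k i j != 0].

Definition lmul f P : fsdo K n := fun k => smul f (P k).
Definition in_mS P : Prop :=
  exists s : seq (series K n * fsdo K n),
    [/\ forall x, x \in s -> in_m x.1,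
        forall x, x \in s -> in_S x.2 &
        P = \sum_(x <- s) lmul x.1 x.2].

Definition act P (f : series K n) : series K n :=
  fun j => \sum_(k \in [set: 'X_{1..n}]) smul (P k) (sderiv k f) j.

Definition act_welldef P : Prop :=
  forall f j, finite_set [set k | smul (P k) (sderiv k f) j != 0].

Definition madic_continuous (phi : series K n -> series K n) : Prop :=
  forall N : int, exists M : int, forall f, val_ge f M -> val_ge (phi f) N.

End Defs.

Arguments done K n : clear implicits.
Arguments dpart K {n} t.
Arguments sone K n : clear implicits.
Arguments svar K {n} t.

From HB Require Import structures.
From mathcomp Require Import all_boot all_order all_algebra.
From mathcomp Require Import boolp classical_sets functions cardinality fsbigop reals.
From mathcomp Require Import complex.
From mathcomp Require Import mpoly.
From mathcomp Require Import ring zify.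
Import Order.TTheory GRing.Theory Num.Theory.
Local Open Scope ring_scope.
Set Implicit Arguments.
Unset Strict Implicit.
Unset Printing Implicit Defensive.

(* A formal sum P = sum_k a_k d^k with o(P) <= c acts on B^ by
   P f = sum_k a_k d^k f: the coefficient of x^j only involves the k with
   |k| <= |j| + c, so the sum is locally finite, and P lowers valuations by at
   most c, so it is m-adically continuous.  The Leibniz rule for d^k (g h)
   (which rests on the Chu-Vandermonde identity for falling factorials) shows
   that the Leibniz product acts as the composite of the actions.  In
   characteristic 0 the action is faithful: P x^k = k! a_k + (terms coming
   from the k' < k), so if P acts by 0, induction on |k| gives a_k = 0.  Every
   algebra identity in S, and the relations of D, are therefore inherited
   from End(B^).  For (2), an operator all of whose coefficients vanish at 0
   is sum_t x_t P_t, where P_t collects the monomials whose first non-zero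
   exponent is the one of x_t. *)

Section MultiIndex.
Variable n : nat.
Local Notation X := 'X_{1..n}.

Definition mdeg_below (b : nat) : seq X :=
  map (@bmnm n b) (enum {: 'X_{1..n < b}}).

Lemma uniq_mdeg_below b : uniq (mdeg_below b).
Proof. by rewrite map_inj_uniq ?enum_uniq //; exact: val_inj. Qed.

Lemma mem_mdeg_below b m : (m \in mdeg_below b) = (mdeg m < b)%N.
Proof.
apply/mapP/idP => [[m' _ ->]|h]; first exact: bmdeg.
by exists (BMultinom h); rewrite ?mem_enum.
Qed.

Lemma lem_mdeg (p j : X) : (p <= j)%MM -> (mdeg p <= mdeg j)%N.
Proof. by move/mnm_lepP => h; rewrite !mdegE; apply: leq_sum => i _. Qed.

Lemma mdeg_submK (i k : X) : (i <= k)%MM -> (mdeg i + mdeg (k - i))%N = mdeg k.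
Proof. by move=> h; rewrite -mdegD addmC submK. Qed.

Lemma ltm_mdeg (a k : X) : (a <= k)%MM -> a != k -> (mdeg a < mdeg k)%N.
Proof.
move=> h hne; have e := mdeg_submK h.
suff : (0 < mdeg (k - a)%MM)%N by lia.
rewrite lt0n mdeg_eq0; apply: contra hne => /eqP h0; apply/eqP/mnmP => t.
move/mnmP: h0 => /(_ t); rewrite mnmBE mnm0E => /eqP; rewrite subn_eq0 => h2.
by apply/eqP; rewrite eqn_leq h2 (mnm_lepP h t).
Qed.

Lemma mnm_le_mdeg (k : X) t : (k t <= mdeg k)%N.
Proof. by rewrite mdegE (bigD1 t) //= leq_addr. Qed.

Lemma lem1 (t : 'I_n) (i : X) : (i <= U_(t))%MM = (i == 0%MM) || (i == U_(t)%MM).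
Proof.
apply/idP/idP => [h|/orP[/eqP ->|/eqP ->]]; last exact: lepm_refl.
- have hs s : s != t -> i s = 0%N.
    by move=> hst; have := mnm_lepP h s; rewrite mnm1E eq_sym (negbTE hst) leqn0 => /eqP.
  case: (boolP (i t == 0%N)) => hit; apply/orP; [left|right]; apply/eqP/mnmP => s.
    by rewrite mnm0E; case: (eqVneq s t) => [->|/hs]; first exact/eqP.
  rewrite mnm1E; case: (eqVneq s t) => [->|/hs //].
  by move: hit; have := mnm_lepP h t; rewrite mnm1E eqxx /=; lia.
- by apply/mnm_lepP => s; rewrite mnm0E.
Qed.

Local Open Scope nat_scope.

(* the falling factorial a^_i = a!/(a-i)! of multi-indices, so that
   d^i x^a = a^_i x^(a-i) *)
Definition mffact (a i : X) : nat := \prod_(t < n) (a t) ^_ (i t).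

Lemma mffact_small (a i : X) : ~~ (i <= a)%MM -> mffact a i = 0.
Proof.
move=> h; have [t ht] : exists t, a t < i t.
  apply/existsP; move: h; rewrite /lem negb_forall => /existsP[t ht].
  by apply/existsP; exists t; rewrite ltnNge.
by rewrite /mffact (bigD1 t) //= ffact_small ?mul0n.
Qed.

Lemma mffactnn_gt0 (k : X) : 0 < mffact k k.
Proof. by apply: prodn_gt0 => t; rewrite ffactnn fact_gt0. Qed.

Lemma ffactnD x m p : x ^_ (m + p) = x ^_ p * (x - p) ^_ m.
Proof.
elim: m => [|m IH]; first by rewrite add0n ffactn0 muln1.
by rewrite addSn !ffactnSr IH -mulnA -subnDA (addnC p m).
Qed.

Lemma mffactD (q a b : X) :
  mffact (q + a) a * mffact (q + a + b) b = mffact (q + (a + b)) (a + b).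
Proof.
rewrite /mffact -big_split /=; apply: eq_bigr => t _.
rewrite !mnmDE -!addnA ffactnD mulnC.
by have -> : q t + (a t + b t) - b t = q t + a t by lia.
Qed.

Lemma Vandermonde_ffact a b k :
  \sum_(x < k.+1) 'C(k, x) * a ^_ x * b ^_ (k - x) = (a + b) ^_ k.
Proof.
rewrite -bin_ffact -binomial.Vandermonde big_distrl /=.
apply: eq_bigr => [[x hx]] _ /=; rewrite ltnS in hx.
by rewrite -!bin_ffact -(bin_fact hx); ring.
Qed.

Lemma big_lem_prod (g : 'I_n -> nat -> nat) (k : X) B : mdeg k < B ->
  \sum_(i <- mdeg_below B | (i <= k)%MM) \prod_(t < n) g t (i t)
  = \prod_(t < n) \sum_(x < (k t).+1) g t x.
Proof.
move=> hB; set D := (mdeg k).+1.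
pose mnm_of (f : {ffun 'I_n -> 'I_D}) : X := [multinom (f t : nat) | t < n].
have hkD t : k t < D by rewrite ltnS mnm_le_mdeg.
rewrite (eq_bigr (fun t => \sum_(x < D) if x <= k t then g t x else 0)); last first.
  move=> t _; rewrite (big_ord_widen D (g t)) ?hkD // big_mkcond /=.
  by apply: eq_bigr => x _; rewrite ltnS.
rewrite bigA_distr_bigA /=.
rewrite (eq_bigr (fun f => if (mnm_of f <= k)%MM
                           then \prod_(t < n) g t (mnm_of f t) else 0)); last first.
  move=> f _; case: ifP => h.
    apply: eq_bigr => t _; rewrite /mnm_of mnmE.
    by move/mnm_lepP: h => /(_ t); rewrite mnmE => ->.
  have [t ht] : exists t, ~~ (f t <= k t).
    apply/existsP; move: h; rewrite /lem negb_forall => /existsP[t ht].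
    by apply/existsP; exists t; rewrite /mnm_of mnmE in ht.
  by rewrite (bigD1 t) //= (negbTE ht) mul0n.
rewrite -big_mkcond /= -big_filter.
rewrite -[RHS]big_filter -(big_map mnm_of predT (fun i => \prod_(t < n) g t (i t))).
apply: perm_big; apply: uniq_perm.
- by rewrite filter_uniq ?uniq_mdeg_below.
- rewrite map_inj_in_uniq ?filter_uniq ?index_enum_uniq //.
  move=> f1 f2 _ _ /mnmP h; apply/ffunP => t; apply/val_inj.
  by move: (h t); rewrite /mnm_of !mnmE.
move=> i; rewrite mem_filter mem_mdeg_below; apply/andP/mapP.
- have ofiE (hik : (i <= k)%MM) : mnm_of [ffun t => inord (i t) : 'I_D] = i.
    apply/mnmP => t; rewrite /mnm_of mnmE ffunE inordK //.
    by move/mnm_lepP: hik => /(_ t) /leq_ltn_trans; apply.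
  move=> [hik _]; exists [ffun t => inord (i t) : 'I_D]; last by rewrite ofiE.
  by rewrite mem_filter mem_index_enum andbT ofiE.
- move=> [f]; rewrite mem_filter => /andP[hf _] ->; split => //.
  by rewrite (leq_ltn_trans (lem_mdeg hf)).
Qed.

Lemma Vandermonde_mffact (a b k : X) B : mdeg k < B ->
  \sum_(i <- mdeg_below B | (i <= k)%MM) mbinom k i * mffact a i * mffact b (k - i)
  = mffact (a + b) k.
Proof.
move=> hB; rewrite (eq_bigr (fun i : X => \prod_(t < n)
    ('C(k t, i t) * (a t) ^_ (i t) * (b t) ^_ (k t - i t)))); last first.
  move=> i _; rewrite /mbinom /mffact -!big_split /=; apply: eq_bigr => t _.
  by rewrite mnmBE.
rewrite (big_lem_prod (fun t x => 'C(k t, x) * (a t) ^_ x * (b t) ^_ (k t - x))) //.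
by rewrite /mffact; apply: eq_bigr => t _; rewrite Vandermonde_ffact mnmDE.
Qed.

End MultiIndex.

Section FiniteSums.
Variables (K : fieldType) (n : nat).
Local Notation X := 'X_{1..n}.
Local Notation T := (@setT 'X_{1..n}).

Definition supp_below (F : X -> K) b := forall x, (b <= mdeg x)%N -> F x = 0.

Lemma supp_belowP (F : X -> K) b :
  (forall x, F x != 0 -> (mdeg x < b)%N) -> supp_below F b.
Proof. by move=> h x hx; apply/eqP; apply: contraLR hx => /h; rewrite -ltnNge. Qed.

Lemma fsbigT_below (F : X -> K) b : supp_below F b ->
  \sum_(m \in T) F m = \sum_(m <- mdeg_below n b) F m.
Proof.
move=> hF; rewrite (fsbigE (mdeg_below n b)) ?uniq_mdeg_below //.
  by apply: eq_bigl => m; rewrite in_setT.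
by move=> m _; rewrite mem_mdeg_below -leqNgt; apply: hF.
Qed.

Lemma fsbig_lem_below (F : X -> K) (j : X) B : (mdeg j < B)%N ->
  \sum_(p \in [set p : X | (p <= j)%MM]) F p
  = \sum_(p <- mdeg_below n B | (p <= j)%MM) F p.
Proof.
move=> hB; rewrite (fsbigE [seq p <- mdeg_below n B | (p <= j)%MM]).
- rewrite big_filter_cond; apply: eq_bigl => p /=.
  by apply/idP/idP => [/andP[]|h] //; rewrite h mem_set.
- by rewrite filter_uniq ?uniq_mdeg_below.
- by move=> p /=; rewrite mem_filter => /andP[].
- move=> p /= hp; rewrite mem_filter mem_mdeg_below hp /=.
  by rewrite (leq_ltn_trans (lem_mdeg hp) hB).
Qed.

Lemma fsbigT_split (F G : X -> K) b : supp_below F b -> supp_below G b ->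
  \sum_(x \in T) (F x + G x) = \sum_(x \in T) F x + \sum_(x \in T) G x.
Proof.
move=> hF hG; rewrite (fsbigT_below hF) (fsbigT_below hG) (@fsbigT_below _ b) ?big_split //.
by move=> x hx; rewrite hF ?hG ?addr0.
Qed.

Lemma fsbigT_big (I : Type) (r : seq I) (P : pred I) (F : I -> X -> K) b :
  (forall i, P i -> supp_below (F i) b) ->
  \sum_(x \in T) \sum_(i <- r | P i) F i x = \sum_(i <- r | P i) \sum_(x \in T) F i x.
Proof.
move=> hF; rewrite (@fsbigT_below _ b); last first.
  by move=> x hx; rewrite big1 // => i hi; rewrite hF.
under [RHS]eq_bigr => i hi do rewrite (fsbigT_below (hF i hi)).
exact: exchange_big.
Qed.

Lemma exchange_fsbigT (F : X -> X -> K) b :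
  (forall x y, F x y != 0 -> (mdeg x < b)%N /\ (mdeg y < b)%N) ->
  \sum_(x \in T) \sum_(y \in T) F x y = \sum_(y \in T) \sum_(x \in T) F x y.
Proof.
move=> hF; have h1 y : supp_below (F^~ y) b.
  by apply: supp_belowP => x /hF[].
have h2 x : supp_below (F x) b by apply: supp_belowP => y /hF[].
rewrite (@fsbigT_below _ b); last first.
  by move=> x hx; rewrite (fsbigT_below (h2 x)) big1 // => y; rewrite h1.
rewrite [RHS](@fsbigT_below _ b); last first.
  by move=> y hy; rewrite (fsbigT_below (h1 y)) big1 // => x; rewrite h2.
under eq_bigr => x _ do rewrite (fsbigT_below (h2 x)).
under [RHS]eq_bigr => y _ do rewrite (fsbigT_below (h1 y)).
exact: exchange_big.
Qed.

Lemma fsbigT_shift (G : X -> K) (c : X) :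
  \sum_(x \in T) G (x + c)%MM = \sum_(x \in T) (if (c <= x)%MM then G x else 0).
Proof.
rewrite [RHS](_ : _ = \sum_(x \in [set x : X | (c <= x)%MM]) G x); last first.
  rewrite [RHS]fsbig_mkcond; apply: eq_fsbigr => x _; rewrite /patch.
  case: (boolP (c <= x)%MM) => h; first by rewrite mem_set.
  by rewrite ifF //; apply/negbTE/negP => /set_mem /=; rewrite (negbTE h).
symmetry; apply: (reindex_fsbig (fun x => (x + c)%MM)); split.
- by move=> x _ /=; apply: lem_addl.
- by move=> x y _ _; apply: addIm.
- by move=> x /= hx; exists (x - c)%MM => //; exact: submK.
Qed.

Lemma fsbigT_single (G : X -> K) c : (forall x, x != c -> G x = 0) ->
  \sum_(x \in T) G x = G c.
Proof.
move=> hG; rewrite -(fsbig_widen [set c]) ?fsbig_set1 //.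
by move=> x [_ /= hx]; rewrite /= hG //; apply/eqP.
Qed.

Lemma big_mdeg_below_delta (G : X -> K) (x : X) B :
  \sum_(p <- mdeg_below n B) ((p == x)%:R * G p) = if (mdeg x < B)%N then G x else 0.
Proof.
case: ifP => hx.
  rewrite (bigD1_seq x) ?mem_mdeg_below ?uniq_mdeg_below //= eqxx mul1r big1 ?addr0 //.
  by move=> p /negbTE ->; rewrite mul0r.
rewrite big1_seq // => p /andP[_ hp]; case: eqP hp => [->|]; last by rewrite mul0r.
by rewrite mem_mdeg_below hx.
Qed.

End FiniteSums.

Lemma big_neq0 (R : nmodType) (I : Type) (r : seq I) (P : pred I) (F : I -> R) :
  \sum_(x <- r | P x) F x != 0 -> exists2 x, P x & F x != 0.
Proof.
apply: contra_neqP => /forall2NP hF; apply: big1 => x Px.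
by case: (hF x) => // /negP/negPn/eqP.
Qed.

Lemma fsbig_neq0 (R : nmodType) (I : choiceType) (A : set I) (F : I -> R) :
  \sum_(x \in A) F x != 0 -> exists2 x, A x & F x != 0.
Proof.
apply: contra_neqP => /forall2NP hF; apply: fsbig1 => x Ax.
by case: (hF x) => // /negP/negPn/eqP.
Qed.

Section PowerSeries.
Variables (K : fieldType) (n : nat).
Local Notation X := 'X_{1..n}.
Local Notation series := (series K n).
Implicit Types (f g h : series).

Lemma addsE f g j : (f + g) j = f j + g j. Proof. by []. Qed.
Lemma scalesE c f j : (c *: f) j = c * f j. Proof. by []. Qed.
Lemma zerosE j : (0 : series) j = 0. Proof. by []. Qed.

Lemma smulE f g j B : (mdeg j < B)%N ->
  smul f g j = \sum_(p <- mdeg_below n B | (p <= j)%MM) f p * g (j - p)%MM.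
Proof. by move=> hB; rewrite /smul (fsbig_lem_below _ hB). Qed.

Lemma smul_pair f g j B : (mdeg j < B)%N ->
  smul f g j = \sum_(p <- mdeg_below n B) \sum_(q <- mdeg_below n B)
                  (((p + q)%MM == j)%:R * (f p * g q)).
Proof.
move=> hB; rewrite (smulE _ _ hB) big_mkcond /=; apply: eq_bigr => p _.
case: (boolP (p <= j)%MM) => h.
  rewrite (eq_bigr (fun q => (q == (j - p)%MM)%:R * (f p * g q))).
    by rewrite big_mdeg_below_delta ifT // (leq_ltn_trans (mdegB _ _) hB).
  move=> q _; congr (_%:R * _).
  suff -> : ((p + q)%MM == j) = (q == (j - p)%MM) by [].
  apply/idP/idP => /eqP hh; apply/eqP; first by rewrite -hh addmC addmK.
  by rewrite hh addmC submK.
rewrite big1 // => q _; case: eqP => [hpq|]; last by rewrite mul0r.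
by move: h; rewrite -hpq lem_addr.
Qed.

Lemma big_mdeg_below_delta_ind (F : X -> X) (x j : X) (Z : K) B :
  (mdeg j < B)%N -> (mdeg x <= mdeg (F x))%N ->
  \sum_(p <- mdeg_below n B) ((F p == j)%:R * ((x == p)%:R * Z)) = (F x == j)%:R * Z.
Proof.
move=> hj hx.
rewrite (eq_bigr (fun p => (p == x)%:R * ((F p == j)%:R * Z))); last first.
  by move=> p _; rewrite mulrCA eq_sym.
rewrite big_mdeg_below_delta; case: ifP => // hB; case: eqP; rewrite ?mul0r // => hF.
by move: hB; rewrite (leq_ltn_trans hx) // hF.
Qed.

Lemma smulA f g h : smul (smul f g) h = smul f (smul g h).
Proof.
apply/funext => j; set B := (mdeg j).+1; have hB : (mdeg j < B)%N by [].
rewrite (smul_pair _ _ hB) (smul_pair _ _ hB).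
have E1 (p c : X) : p \in mdeg_below n B ->
  ((p + c)%MM == j)%:R * (smul f g p * h c) =
  \sum_(a <- mdeg_below n B) \sum_(b <- mdeg_below n B)
     (((p + c)%MM == j)%:R * (((a + b)%MM == p)%:R * (f a * g b * h c))).
  rewrite mem_mdeg_below => hp; rewrite (smul_pair _ _ hp) mulr_suml mulr_sumr.
  apply: eq_bigr => a _; rewrite mulr_suml mulr_sumr; apply: eq_bigr => b _.
  by rewrite !mulrA.
have E2 (a q : X) : q \in mdeg_below n B ->
  ((a + q)%MM == j)%:R * (f a * smul g h q) =
  \sum_(b <- mdeg_below n B) \sum_(c <- mdeg_below n B)
     (((a + q)%MM == j)%:R * (((b + c)%MM == q)%:R * (f a * g b * h c))).
  rewrite mem_mdeg_below => hq; rewrite (smul_pair _ _ hq) !mulr_sumr.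
  apply: eq_bigr => b _; rewrite !mulr_sumr; apply: eq_bigr => c _.
  by ring.
rewrite (eq_big_seq _ (fun p hp => eq_bigr _ (fun c _ => E1 p c hp))).
rewrite [RHS](eq_bigr _ (fun a _ => eq_big_seq _ (fun q hq => E2 a q hq))).
(* both sides become the triple sum over (a, b, c) with a + b + c = j *)
rewrite exchange_big /=.
under eq_bigr => c _ do rewrite exchange_big /=.
under eq_bigr => c _ do under eq_bigr => a _ do rewrite exchange_big /=.
under eq_bigr => c _ do under eq_bigr => a _ do under eq_bigr => b _ do
  rewrite (@big_mdeg_below_delta_ind (fun p => (p + c)%MM) (a + b)%MM j _ _ hB
            (lem_mdeg (lem_addr _ _))).
under [RHS]eq_bigr => a _ do rewrite exchange_big /=.
under [RHS]eq_bigr => a _ do under eq_bigr => b _ do rewrite exchange_big /=.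
under [RHS]eq_bigr => a _ do under eq_bigr => b _ do under eq_bigr => c _ do
  rewrite (@big_mdeg_below_delta_ind (fun q => (a + q)%MM) (b + c)%MM j _ _ hB
            (lem_mdeg (lem_addl _ _))).
rewrite exchange_big /=; apply: eq_bigr => a _.
by rewrite exchange_big /=; apply: eq_bigr => b _; apply: eq_bigr => c _; rewrite addmA.
Qed.

Lemma smulDl f g h : smul (f + g) h = smul f h + smul g h.
Proof.
apply/funext => j; rewrite addsE !(@smulE _ _ j (mdeg j).+1) // -big_split.
by apply: eq_bigr => p _; rewrite addsE mulrDl.
Qed.

Lemma smulDr f g h : smul f (g + h) = smul f g + smul f h.
Proof.
apply/funext => j; rewrite addsE !(@smulE _ _ j (mdeg j).+1) // -big_split.
by apply: eq_bigr => p _; rewrite addsE mulrDr.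
Qed.

Lemma smulZl c f g : smul (c *: f) g = c *: smul f g.
Proof.
apply/funext => j; rewrite scalesE !(@smulE _ _ j (mdeg j).+1) // mulr_sumr.
by apply: eq_bigr => p _; rewrite scalesE mulrA.
Qed.

Lemma smulZr c f g : smul f (c *: g) = c *: smul f g.
Proof.
apply/funext => j; rewrite scalesE !(@smulE _ _ j (mdeg j).+1) // mulr_sumr.
by apply: eq_bigr => p _; rewrite scalesE mulrCA.
Qed.

Lemma smul0l f : smul 0 f = 0.
Proof.
apply/funext => j; rewrite (@smulE _ _ j (mdeg j).+1) // big1 // => p _.
by rewrite zerosE mul0r.
Qed.

Lemma smul0r f : smul f 0 = 0.
Proof.
apply/funext => j; rewrite (@smulE _ _ j (mdeg j).+1) // big1 // => p _.
by rewrite zerosE mulr0.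
Qed.

Lemma smul1l f : smul (sone K n) f = f.
Proof.
apply/funext => j; rewrite (@smulE _ _ j (mdeg j).+1) //.
rewrite big_mkcond (bigD1_seq 0%MM) ?mem_mdeg_below ?mdeg0 ?uniq_mdeg_below //=.
have -> : (0 <= j)%MM by apply/mnm_lepP => t; rewrite mnm0E.
rewrite /sone eqxx mul1r subm0 big1 ?addr0 // => p hp.
by rewrite (negbTE hp) mul0r if_same.
Qed.

Lemma smul1r f : smul f (sone K n) = f.
Proof.
apply/funext => j; rewrite (@smulE _ _ j (mdeg j).+1) //.
rewrite big_mkcond (bigD1_seq j) ?mem_mdeg_below ?uniq_mdeg_below //= lepm_refl.
have -> : (j - j)%MM = 0%MM by apply/mnmP => t; rewrite mnmBE mnm0E subnn.
rewrite /sone eqxx mulr1 big1 ?addr0 // => p hp; case: ifP => // hpj.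
suff /negbTE -> : (j - p)%MM != 0%MM by rewrite mulr0.
by rewrite -mdeg_eq0 -lt0n; move: (ltm_mdeg hpj hp) (mdeg_submK hpj); lia.
Qed.

Lemma smul_sumr (I : Type) (r : seq I) (P : pred I) g (F : I -> series) :
  smul g (\sum_(i <- r | P i) F i) = \sum_(i <- r | P i) smul g (F i).
Proof.
by elim/big_rec2: _ => [|i y1 y2 _ <-]; rewrite ?smul0r ?smulDr.
Qed.

Lemma smul_suml (I : Type) (r : seq I) (P : pred I) g (F : I -> series) :
  smul (\sum_(i <- r | P i) F i) g = \sum_(i <- r | P i) smul (F i) g.
Proof.
by elim/big_rec2: _ => [|i y1 y2 _ <-]; rewrite ?smul0l ?smulDl.
Qed.

Lemma sderivE i f q : sderiv i f q = (mffact (q + i)%MM i)%:R * f (q + i)%MM.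
Proof.
rewrite /sderiv /mffact; congr (_%:R * _); apply: eq_bigr => t _.
by rewrite mnmDE.
Qed.

Lemma sderiv0 f : sderiv 0%MM f = f.
Proof.
apply/funext => q; rewrite sderivE addm0 /mffact big1 ?mul1r // => t _.
by rewrite mnm0E ffactn0.
Qed.

Lemma sderiv_comp a b f : sderiv a (sderiv b f) = sderiv (a + b)%MM f.
Proof. by apply/funext => q; rewrite !sderivE mulrA -natrM mffactD addmA. Qed.

Lemma sderivU t f : sderiv U_(t)%MM f = pderiv t f.
Proof.
apply/funext => q; rewrite sderivE /pderiv /mffact (bigD1 t) //= big1 ?muln1.
  by rewrite mnmDE !mnm1E eqxx ffactn1 addn1.
by move=> s /negbTE hs; rewrite mnm1E eq_sym hs ffactn0.
Qed.

Lemma sderivD i f g : sderiv i (f + g) = sderiv i f + sderiv i g.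
Proof. by apply/funext => q; rewrite addsE !sderivE addsE mulrDr. Qed.

Lemma sderivZ i c f : sderiv i (c *: f) = c *: sderiv i f.
Proof. by apply/funext => q; rewrite scalesE !sderivE scalesE mulrCA. Qed.

Lemma sderiv0r i : sderiv i (0 : series) = 0.
Proof. by apply/funext => q; rewrite sderivE zerosE mulr0. Qed.

End PowerSeries.

Section Leibniz.
Variables (K : fieldType) (n : nat).
Local Notation X := 'X_{1..n}.
Local Notation series := (series K n).
Implicit Types (f g h : series).

Lemma boolr_mul_neq0 (b : bool) (z : K) : b%:R * z != 0 -> b.
Proof. by case: b => //; rewrite mul0r eqxx. Qed.

Lemma big_mdeg_below_shift (G : X -> K) i B B' :
  supp_below (fun a => G (a + i)%MM) B -> supp_below G B' ->
  \sum_(a <- mdeg_below n B) G (a + i)%MM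
  = \sum_(a <- mdeg_below n B') (if (i <= a)%MM then G a else 0).
Proof.
move=> h1 h2; rewrite -(fsbigT_below h1) fsbigT_shift (@fsbigT_below _ _ _ B') //.
by move=> x hx; rewrite h2 // if_same.
Qed.

Lemma smul_sderiv g h i i' q B : (mdeg q + mdeg i + mdeg i' < B)%N ->
  smul (sderiv i g) (sderiv i' h) q =
  \sum_(a <- mdeg_below n B) \sum_(b <- mdeg_below n B)
     (((a + b)%MM == (q + i + i')%MM)%:R
      * ((mffact a i * mffact b i')%:R * (g a * h b))).
Proof.
move=> hB; have hqB : (mdeg q < B)%N.
  by apply: leq_ltn_trans hB; rewrite -addnA leq_addr.
rewrite (smul_pair _ _ hqB).
have shift_b (a' : X) : \sum_(b' <- mdeg_below n B)
    (((a' + b')%MM == q)%:R * (sderiv i g a' * sderiv i' h b')) =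
  \sum_(b <- mdeg_below n B)
    (((a' + b)%MM == (q + i')%MM)%:R * (sderiv i g a' * ((mffact b i')%:R * h b))).
  set G := fun b => ((a' + b)%MM == (q + i')%MM)%:R
                    * (sderiv i g a' * ((mffact b i')%:R * h b)).
  rewrite (eq_bigr (fun b' => G (b' + i')%MM)); last first.
    by move=> b' _; rewrite /G [sderiv i' h b']sderivE addmA eqm_add2r.
  rewrite (big_mdeg_below_shift (B' := B)).
  - apply: eq_bigr => b _; rewrite /G; case: ifP => // /negbT /mffact_small ->.
    by rewrite mul0r mulr0 mulr0.
  - apply: supp_belowP => b' /boolr_mul_neq0 /eqP; rewrite addmA => /addIm hab.
    by apply: leq_ltn_trans hqB; rewrite -hab mdegD leq_addl.
  - apply: supp_belowP => b /boolr_mul_neq0 /eqP hb; apply: leq_ltn_trans hB.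
    by have := congr1 mdeg hb; rewrite !mdegD; lia.
rewrite (eq_bigr _ (fun a' _ => shift_b a')).
set G := fun a => \sum_(b <- mdeg_below n B)
    (((a + b)%MM == (q + i + i')%MM)%:R
     * ((mffact a i)%:R * g a * ((mffact b i')%:R * h b))).
rewrite (eq_bigr (fun a' => G (a' + i)%MM)); last first.
  move=> a' _; apply: eq_bigr => b _; rewrite sderivE.
  by rewrite -[(q + i + i')%MM]addmA [(i + i')%MM]addmC addmA
    -[(a' + i + b)%MM]addmA [(i + b)%MM]addmC addmA eqm_add2r.
have G_supp a : G a != 0 -> (mdeg a < B)%N.
  move=> /big_neq0 [b _ /boolr_mul_neq0 /eqP hb]; apply: leq_ltn_trans hB.
  by have := congr1 mdeg hb; rewrite !mdegD; lia.
rewrite (big_mdeg_below_shift (B' := B)).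
- apply: eq_bigr => a _; rewrite /G; case: ifP => [_|/negbT /mffact_small hff].
    by apply: eq_bigr => b _; rewrite natrM; congr (_ * _); ring.
  by rewrite big1 // => b _; rewrite hff mulr0n !(mul0r, mulr0).
- by apply: supp_belowP => a' /G_supp; apply: leq_ltn_trans; rewrite mdegD leq_addr.
- exact: supp_belowP.
Qed.

Lemma Leibniz_coef g h k q B : (mdeg k < B)%N ->
  sderiv k (smul g h) q = \sum_(i <- mdeg_below n B | (i <= k)%MM)
      (mbinom k i)%:R * smul (sderiv i g) (sderiv (k - i)%MM h) q.
Proof.
move=> hB; set B2 := (mdeg q + mdeg k).+1.
have hB2 : (mdeg (q + k)%MM < B2)%N by rewrite mdegD.
rewrite sderivE (smul_pair _ _ hB2).
rewrite [RHS](eq_bigr (fun i => (mbinom k i)%:R *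
   \sum_(a <- mdeg_below n B2) \sum_(b <- mdeg_below n B2)
     (((a + b)%MM == (q + k)%MM)%:R
      * ((mffact a i * mffact b (k - i)%MM)%:R * (g a * h b))))); last first.
  move=> i hik; rewrite (smul_sderiv _ _ (B := B2)); last by rewrite -addnA mdeg_submK.
  by rewrite -addmA [(i + _)%MM]addmC submK.
rewrite mulr_sumr.
under eq_bigr => i _ do rewrite mulr_sumr.
under eq_bigr => i _ do under eq_bigr => a _ do rewrite mulr_sumr.
rewrite exchange_big /=; apply: eq_bigr => a _.
rewrite mulr_sumr exchange_big /=; apply: eq_bigr => b _.
case: eqP => hab; last by rewrite mul0r mulr0 big1 // => i _; rewrite mul0r mulr0.
rewrite mul1r.
under eq_bigr => i _ do rewrite mul1r mulrA -natrM.
rewrite -big_distrl /= -natr_sum.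
under eq_bigr => i _ do rewrite mulnA.
by rewrite (Vandermonde_mffact _ _ hB) hab.
Qed.

Lemma Leibniz g h k B : (mdeg k < B)%N ->
  sderiv k (smul g h) = \sum_(i <- mdeg_below n B | (i <= k)%MM)
      (mbinom k i)%:R *: smul (sderiv i g) (sderiv (k - i)%MM h).
Proof.
move=> hB; apply/funext => q; rewrite (Leibniz_coef _ _ _ hB) fct_sumE.
by apply: eq_bigr => i _; rewrite scalesE.
Qed.

Lemma pderiv_smul t f g :
  pderiv t (smul f g) = smul f (pderiv t g) + smul (pderiv t f) g.
Proof.
have sum_lemU (F : X -> series) :
    \sum_(i <- mdeg_below n 2 | (i <= U_(t))%MM) F i = F 0%MM + F U_(t)%MM.
  rewrite -big_filter (perm_big [:: 0%MM; U_(t)%MM]).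
    by rewrite !big_cons big_nil /= addr0.
  apply: uniq_perm; first by rewrite filter_uniq ?uniq_mdeg_below.
    by rewrite /= inE eq_sym mnm1_eq0.
  move=> i; rewrite mem_filter mem_mdeg_below !inE lem1.
  case: (eqVneq i 0%MM) => [->|_] /=; first by rewrite mdeg0.
  by case: (eqVneq i U_(t)%MM) => [->|_] //=; rewrite mdeg1.
rewrite -!sderivU (Leibniz _ _ (B := 2)) ?mdeg1 // sum_lemU addrC.
have -> : mbinom U_(t)%MM 0%MM = 1%N.
  by rewrite /mbinom big1 // => s _; rewrite mnm0E bin0.
have -> : mbinom U_(t)%MM U_(t)%MM = 1%N.
  by rewrite /mbinom big1 // => s _; rewrite binn.
have -> : (U_(t) - U_(t))%MM = 0%MM by apply/mnmP => s; rewrite mnmBE subnn mnm0E.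
by rewrite subm0 !sderiv0 !scale1r addrC.
Qed.

End Leibniz.

Section Valuation.
Variables (K : fieldType) (n : nat).
Local Notation X := 'X_{1..n}.
Local Notation T := (@setT 'X_{1..n}).
Local Notation series := (series K n).
Implicit Types (f g h : series).

Lemma val_geW f (a b : int) : b <= a -> val_ge f a -> val_ge f b.
Proof. by move=> hba hf j hj; apply: hf; apply: lt_le_trans hba. Qed.

Lemma val_ge0 f : val_ge f 0.
Proof. by move=> j hj; exfalso; lia. Qed.

Lemma val_geD f g a : val_ge f a -> val_ge g a -> val_ge (f + g) a.
Proof. by move=> hf hg j hj; rewrite addsE hf ?hg ?addr0. Qed.

Lemma val_geZ c f a : val_ge f a -> val_ge (c *: f) a.
Proof. by move=> hf j hj; rewrite scalesE hf ?mulr0. Qed.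

Lemma val_ge_neq0 f a j : val_ge f a -> f j != 0 -> a <= (mdeg j)%:Z.
Proof. by move=> hf; apply: contraR; rewrite -ltNge => hj; rewrite hf ?eqxx. Qed.

Lemma val_ge_smul f g a b : val_ge f a -> val_ge g b -> val_ge (smul f g) (a + b).
Proof.
move=> hf hg j hj; rewrite (@smulE _ _ _ _ j (mdeg j).+1) // big1 // => p hp.
have e := mdeg_submK hp.
have [->|hfp] := eqVneq (f p) 0; first by rewrite mul0r.
have [->|hgp] := eqVneq (g (j - p)%MM) 0; first by rewrite mulr0.
by have := val_ge_neq0 hf hfp; have := val_ge_neq0 hg hgp; lia.
Qed.

Lemma val_ge_sderiv f a i : val_ge f a -> val_ge (sderiv i f) (a - (mdeg i)%:Z).
Proof. by move=> hf q hq; rewrite sderivE hf ?mulr0 //; rewrite mdegD; lia. Qed.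

Lemma val_ge_sum (I : Type) (r : seq I) (P : pred I) (F : I -> series) a :
  (forall i, P i -> val_ge (F i) a) -> val_ge (\sum_(i <- r | P i) F i) a.
Proof. by move=> hF j hj; rewrite fct_sumE big1 // => i hi; exact: hF. Qed.

Lemma val_ge_fsbig (F : X -> series) a (A : set X) :
  (forall i, A i -> val_ge (F i) a) -> val_ge (fun j => \sum_(i \in A) F i j) a.
Proof. by move=> hF j hj; rewrite fsbig1 // => i hi; rewrite hF. Qed.

Definition locfin (G : X -> series) (c : nat) :=
  forall k j, (mdeg j + c <= mdeg k)%N -> G k j = 0.

(* a finitely supported sum is 0 when the support is infinite: [lsum G] is
   the honest sum of the G k only under [locfin G c] *)
Definition lsum (G : X -> series) : series := fun j => \sum_(k \in T) G k j.

Lemma locfin_val_ge (G : X -> series) (c : nat) :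
  (forall k, val_ge (G k) ((mdeg k)%:Z - c%:Z)) -> locfin G c.+1.
Proof. by move=> hG k j hj; apply: hG; lia. Qed.

Lemma locfinW G c c' : (c <= c')%N -> locfin G c -> locfin G c'.
Proof. by move=> hc hG k j hj; apply: hG; apply: leq_trans hj; rewrite leq_add2l. Qed.

Lemma locfin_smull G (H : X -> series) c :
  locfin G c -> locfin (fun k => smul (G k) (H k)) c.
Proof.
move=> hG k j hj; rewrite (@smulE _ _ _ _ j (mdeg j).+1) // big1 // => p hp.
by rewrite hG ?mul0r // (leq_trans _ hj) // leq_add2r lem_mdeg.
Qed.

Lemma locfin_smulr G (H : X -> series) c :
  locfin G c -> locfin (fun k => smul (H k) (G k)) c.
Proof.
move=> hG k j hj; rewrite (@smulE _ _ _ _ j (mdeg j).+1) // big1 // => p hp.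
by rewrite hG ?mulr0 // (leq_trans _ hj) // leq_add2r mdegB.
Qed.

Lemma locfin_sderiv G c i : locfin G c -> locfin (fun k => sderiv i (G k)) (c + mdeg i).
Proof. by move=> hG k j hj; rewrite sderivE hG ?mulr0 //; rewrite mdegD; lia. Qed.

Lemma locfin_coef G c j : locfin G c -> supp_below (fun k => G k j) (mdeg j + c).
Proof. by move=> hG k hk; apply: hG. Qed.

Lemma lsumE G c j : locfin G c ->
  lsum G j = \sum_(k <- mdeg_below n (mdeg j + c)) G k j.
Proof. by move=> hG; rewrite /lsum (fsbigT_below (locfin_coef (j := j) hG)). Qed.

Lemma sderiv_lsum i G : sderiv i (lsum G) = lsum (fun k => sderiv i (G k)).
Proof.
apply/funext => q; rewrite sderivE /lsum mulr_fsumr; apply: eq_fsbigr => k _.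
by rewrite sderivE.
Qed.

Lemma smul_lsumr g G c : locfin G c -> smul g (lsum G) = lsum (fun k => smul g (G k)).
Proof.
move=> hG; apply/funext => j; rewrite (lsumE _ (locfin_smulr (fun _ => g) hG)).
rewrite (@smulE _ _ _ _ j (mdeg j).+1) //.
under eq_bigr => p hp.
  rewrite /lsum (@fsbigT_below _ _ _ (mdeg j + c)); last first.
    by move=> k hk; apply: hG; apply: leq_trans hk; rewrite leq_add2r mdegB.
  rewrite mulr_sumr.
over.
by rewrite exchange_big /=; apply: eq_bigr => k _; rewrite (@smulE _ _ _ _ j (mdeg j).+1).
Qed.

Lemma smul_lsuml h G c : locfin G c -> smul (lsum G) h = lsum (fun k => smul (G k) h).
Proof.
move=> hG; apply/funext => j; rewrite (lsumE _ (locfin_smull (fun _ => h) hG)).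
rewrite (@smulE _ _ _ _ j (mdeg j).+1) //.
under eq_bigr => p hp.
  rewrite /lsum (@fsbigT_below _ _ _ (mdeg j + c)); last first.
    by move=> k hk; apply: hG; apply: leq_trans hk; rewrite leq_add2r lem_mdeg.
  rewrite mulr_suml.
over.
by rewrite exchange_big /=; apply: eq_bigr => k _; rewrite (@smulE _ _ _ _ j (mdeg j).+1).
Qed.

End Valuation.

Section Action.
Variables (K : fieldType) (n : nat).
Local Notation X := 'X_{1..n}.
Local Notation series := (series K n).
Local Notation fsdo := (fsdo K n).
Implicit Types (f g h : series) (P Q R : fsdo).

Definition ord_le P (c : nat) := forall k, val_ge (P k) ((mdeg k)%:Z - c%:Z).

Lemma in_S_ord_le P : in_S P -> exists c, ord_le P c.
Proof. by case=> N hN; exists `|N|%N => k; apply: (val_geW _ (hN k)); lia. Qed.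

Lemma ord_le_in_S P c : ord_le P c -> in_S P.
Proof. by move=> h; exists c%:Z. Qed.

Lemma ord_leW P c c' : (c <= c')%N -> ord_le P c -> ord_le P c'.
Proof. by move=> hc h k; apply: (val_geW _ (h k)); lia. Qed.

Lemma ord_le0 : ord_le (0 : fsdo) 0.
Proof. by move=> k j _. Qed.

Lemma in_S0 : in_S (0 : fsdo).
Proof. exact: ord_le_in_S ord_le0. Qed.

Lemma in_SD P Q : in_S P -> in_S Q -> in_S (P + Q).
Proof.
move=> /in_S_ord_le[cP hP] /in_S_ord_le[cQ hQ].
apply: (@ord_le_in_S _ (maxn cP cQ)) => k; apply: val_geD.
  exact: ord_leW (leq_maxl _ _) hP k.
exact: ord_leW (leq_maxr _ _) hQ k.
Qed.

Lemma in_SZ (a : K) P : in_S P -> in_S (a *: P).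
Proof. by case=> c hP; exists c => k; apply: val_geZ. Qed.

Lemma in_S_dcoef g : in_S (dcoef g).
Proof.
apply: (@ord_le_in_S _ 0) => k j hj; rewrite /dcoef.
case: ifP => [/eqP hk|_]; last by rewrite zerosE.
by move: hj; rewrite hk mdeg0; lia.
Qed.

Lemma in_S_done : in_S (done K n).
Proof.
apply: (@ord_le_in_S _ 0) => k j hj; rewrite /done.
case: ifP => [/eqP hk|_]; last by rewrite zerosE.
by move: hj; rewrite hk mdeg0; lia.
Qed.

Lemma in_S_dpart (t : 'I_n) : in_S (dpart K t).
Proof.
apply: (@ord_le_in_S _ 1) => k j hj; rewrite /dpart.
case: ifP => [/eqP hk|_]; last by rewrite zerosE.
by move: hj; rewrite hk mdeg1; lia.
Qed.

Lemma ord_le_locfin P c : ord_le P c -> locfin P c.+1.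
Proof. exact: locfin_val_ge. Qed.

Lemma actE P g : act P g = lsum (fun k => smul (P k) (sderiv k g)).
Proof. by []. Qed.

Lemma locfin_act P c g : locfin P c -> locfin (fun k => smul (P k) (sderiv k g)) c.
Proof. exact: locfin_smull. Qed.

Lemma in_S_act_welldef P : in_S P -> act_welldef P.
Proof.
move=> /in_S_ord_le[c /ord_le_locfin hP] f j.
apply: (sub_finite_set _ (finite_seq (mdeg_below n (mdeg j + c.+1)))).
move=> k /= hk; rewrite mem_mdeg_below ltnNge; apply/negP => hk'; move: hk.
by rewrite (locfin_act f hP) ?eqxx.
Qed.

Lemma act_linear P : in_S P -> forall (a : K) f g,
  act P (a *: f + g) = a *: act P f + act P g.
Proof.
move=> /in_S_ord_le[c /ord_le_locfin hP] a f g; apply/funext => j; rewrite addsE scalesE !actE.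
rewrite !(lsumE _ (locfin_act _ hP)) mulr_sumr -big_split /=.
apply: eq_bigr => k _; rewrite sderivD sderivZ smulDr smulZr.
by rewrite addsE scalesE.
Qed.

Lemma act0r P : act P 0 = 0.
Proof.
apply/funext => j; rewrite actE /lsum zerosE fsbig1 // => k _.
by rewrite sderiv0r smul0r zerosE.
Qed.

Lemma actDr P : in_S P -> forall f g, act P (f + g) = act P f + act P g.
Proof. by move=> hP f g; rewrite -[f in LHS]scale1r (act_linear hP) scale1r. Qed.

Lemma actZr P : in_S P -> forall (a : K) f, act P (a *: f) = a *: act P f.
Proof. by move=> hP a f; rewrite -[a *: f]addr0 (act_linear hP) act0r addr0. Qed.

Lemma act_continuous P : in_S P -> madic_continuous (act P).
Proof.
move=> /in_S_ord_le[c hP] N; exists (N + c%:Z) => f hf; rewrite actE /lsum.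
apply: val_ge_fsbig => k _.
by apply: (val_geW _ (val_ge_smul (hP k) (val_ge_sderiv (i := k) hf))); lia.
Qed.

Lemma actDl P Q : in_S P -> in_S Q -> forall f, act (P + Q) f = act P f + act Q f.
Proof.
move=> /in_S_ord_le[cP /ord_le_locfin hP] /in_S_ord_le[cQ /ord_le_locfin hQ] f.
apply/funext => j.
rewrite addsE !actE /lsum -(@fsbigT_split _ _ _ _ (mdeg j + maxn cP.+1 cQ.+1)).
- by apply: eq_fsbigr => k _; rewrite [(P + Q) k]/= smulDl addsE.
- exact: (locfin_coef (j := j) (locfin_act f (locfinW (leq_maxl _ _) hP))).
- exact: (locfin_coef (j := j) (locfin_act f (locfinW (leq_maxr _ _) hQ))).
Qed.

Lemma actZl P (a : K) f : act (a *: P) f = a *: act P f.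
Proof.
apply/funext => j; rewrite scalesE !actE /lsum mulr_fsumr.
by apply: eq_fsbigr => k _; rewrite [(a *: P) k]/= smulZl scalesE.
Qed.

Lemma act_done f : act (done K n) f = f.
Proof.
apply/funext => j; rewrite actE /lsum (@fsbigT_single _ _ _ 0%MM).
  by rewrite /done eqxx smul1l sderiv0.
by move=> k /negbTE hk; rewrite /done hk smul0l zerosE.
Qed.

Lemma act_dcoef g f : act (dcoef g) f = smul g f.
Proof.
apply/funext => j; rewrite actE /lsum (@fsbigT_single _ _ _ 0%MM).
  by rewrite /dcoef eqxx sderiv0.
by move=> k /negbTE hk; rewrite /dcoef hk smul0l zerosE.
Qed.

Lemma act_dpart t f : act (dpart K t) f = pderiv t f.
Proof.
apply/funext => j; rewrite actE /lsum (@fsbigT_single _ _ _ U_(t)%MM).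
  by rewrite /dpart eqxx smul1l sderivU.
by move=> k /negbTE hk; rewrite /dpart hk smul0l zerosE.
Qed.

End Action.

Section Product.
Variables (K : fieldType) (n : nat).
Local Notation X := 'X_{1..n}.
Local Notation series := (series K n).
Local Notation fsdo := (fsdo K n).
Implicit Types (f g h : series) (P Q R : fsdo).

Lemma mem_lrange (m k i : X) : (i \in lrange m k) = ((i <= k) && (k - i <= m))%MM.
Proof. by apply/idP/idP => [/set_mem|h] //; exact: mem_set. Qed.

Lemma lrange_sum (F : X -> K) (m k : X) :
  \sum_(i \in lrange m k) F i = \sum_(i <- mdeg_below n (mdeg k).+1 | (i <= k)%MM)
     (if (k - i <= m)%MM then F i else 0).
Proof.
rewrite fsbig_mkcond (@fsbigT_below _ _ _ (mdeg k).+1).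
  rewrite [RHS]big_mkcond; apply: eq_bigr => i _; rewrite /patch mem_lrange.
  by case: (i <= k)%MM; case: (k - i <= m)%MM.
move=> i hi; rewrite /patch mem_lrange; case: ifP => // /andP[hik _].
by move: hi; rewrite leqNgt ltnS lem_mdeg.
Qed.

Lemma val_ge_lterm P Q cP cQ (m k i : X) : ord_le P cP -> ord_le Q cQ ->
  (i <= k)%MM -> (k - i <= m)%MM ->
  val_ge (lterm P Q m k i) ((mdeg m)%:Z - cP%:Z - cQ%:Z).
Proof.
move=> hP hQ hik hkm; rewrite /lterm; apply: val_geZ.
apply: (val_geW _ (val_ge_smul (hP k) (val_ge_sderiv (i := i) (hQ (m - (k - i))%MM)))).
by have := mdeg_submK hik; have := mdeg_submK hkm; lia.
Qed.

Lemma dmul_ord_le P Q cP cQ : ord_le P cP -> ord_le Q cQ -> ord_le (dmul P Q) (cP + cQ).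
Proof.
move=> hP hQ m.
apply: (@val_ge_fsbig _ _ (fun k j => \sum_(i \in lrange m k) lterm P Q m k i j)) => k _.
apply: val_ge_fsbig => i /= /andP[hik hkm].
by apply: (val_geW _ (val_ge_lterm hP hQ hik hkm)); lia.
Qed.

Lemma in_S_dmul P Q : in_S P -> in_S Q -> in_S (dmul P Q).
Proof.
move=> /in_S_ord_le[cP hP] /in_S_ord_le[cQ hQ].
exact: ord_le_in_S (dmul_ord_le hP hQ).
Qed.

Lemma lterm_locfin P Q cP (m i : X) : ord_le P cP ->
  locfin (fun k => lterm P Q m k i) cP.+1.
Proof.
move=> /ord_le_locfin hP k j hk; rewrite /lterm scalesE.
by rewrite (locfin_smull (fun k => sderiv i (Q (m - (k - i))%MM)) hP) ?mulr0.
Qed.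

Lemma dmul_locfin P Q cP (m : X) : ord_le P cP ->
  locfin (fun k j => \sum_(i \in lrange m k) lterm P Q m k i j) cP.+1.
Proof. by move=> hP k j hj; rewrite fsbig1 // => i _; rewrite (lterm_locfin Q m i hP). Qed.

Lemma in_S_dmul_welldef P Q : in_S P -> dmul_welldef P Q.
Proof.
move=> /in_S_ord_le[cP hP] m j.
apply: (sub_finite_set _ (finite_seq (mdeg_below n (mdeg j + cP.+1)))).
move=> k /= [i _ hk]; rewrite mem_mdeg_below ltnNge; apply/negP => hk'; move: hk.
by rewrite (lterm_locfin Q m i hP) ?eqxx.
Qed.

Lemma lterm_act_neq0 P Q cP cQ (m k i j : X) f : ord_le P cP -> ord_le Q cQ ->
  (i <= k)%MM -> (k - i <= m)%MM ->
  smul (lterm P Q m k i) (sderiv m f) j != 0 ->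
  (mdeg m < mdeg j + cP + cQ + 1)%N /\ (mdeg k < mdeg j + cP + cQ + 1)%N.
Proof.
move=> hP hQ hik hkm hnz; split.
  have := val_ge_neq0 (val_ge_smul (val_ge_lterm hP hQ hik hkm) (val_ge0 (sderiv m f))) hnz.
  lia.
rewrite ltnNge; apply/negP => hk; move: hnz.
rewrite (locfin_smull (fun _ => sderiv m f) (lterm_locfin Q m i hP)) ?eqxx //.
by apply: leq_trans hk; lia.
Qed.

Lemma smul_dmul_sderiv P Q cP (m : X) f : ord_le P cP ->
  smul (dmul P Q m) (sderiv m f) = lsum (fun k =>
    \sum_(i <- mdeg_below n (mdeg k).+1 | (i <= k)%MM)
       (if (k - i <= m)%MM then smul (lterm P Q m k i) (sderiv m f) else 0)).
Proof.
move=> hP.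
have -> : dmul P Q m = lsum (fun k j => \sum_(i \in lrange m k) lterm P Q m k i j) by [].
rewrite (smul_lsuml _ (dmul_locfin Q m hP)); congr lsum; apply/funext => k.
have -> : (fun j => \sum_(i \in lrange m k) lterm P Q m k i j) =
    \sum_(i <- mdeg_below n (mdeg k).+1 | (i <= k)%MM)
       (if (k - i <= m)%MM then lterm P Q m k i else 0).
  apply/funext => j; rewrite lrange_sum fct_sumE; apply: eq_bigr => i _.
  by case: ifP.
by rewrite smul_suml; apply: eq_bigr => i _; case: ifP; rewrite ?smul0l.
Qed.

Lemma smul_sderiv_act P Q cQ (k : X) f : ord_le Q cQ ->
  smul (P k) (sderiv k (act Q f)) =
  lsum (fun l => \sum_(i <- mdeg_below n (mdeg k).+1 | (i <= k)%MM)
    (mbinom k i)%:R *: smul (smul (P k) (sderiv i (Q l))) (sderiv (l + (k - i))%MM f)).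
Proof.
move=> /ord_le_locfin hQ; rewrite actE sderiv_lsum.
rewrite (smul_lsumr _ (locfin_sderiv (i := k) (locfin_act f hQ))).
congr lsum; apply/funext => l.
rewrite (Leibniz _ _ (ltnSn (mdeg k))) smul_sumr; apply: eq_bigr => i _.
by rewrite smulZr sderiv_comp smulA [(k - i + l)%MM]addmC.
Qed.

(* Both sides are double sums, over (m, k) and over (k, l), of terms indexed
   by i <= k, which match under l = m - (k - i). *)
Lemma act_dmul P Q f : in_S P -> in_S Q -> act (dmul P Q) f = act P (act Q f).
Proof.
move=> /in_S_ord_le[cP hP] /in_S_ord_le[cQ hQ]; apply/funext => j.
set b := (mdeg j + cP + cQ + 1)%N.
rewrite [in LHS]actE [in RHS]actE /lsum.
under eq_fsbigr => m _ do rewrite (smul_dmul_sderiv Q m f hP) /lsum.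
under [RHS]eq_fsbigr => k _ do rewrite (smul_sderiv_act P k f hQ) /lsum.
rewrite (@exchange_fsbigT _ _ _ b); last first.
  move=> m k; rewrite fct_sumE => /big_neq0 [i hik].
  case: ifP => [hkm hnz|_]; last by rewrite zerosE eqxx.
  exact: lterm_act_neq0 hP hQ hik hkm hnz.
apply: eq_fsbigr => k _.
under eq_fsbigr => m _ do rewrite fct_sumE.
under [RHS]eq_fsbigr => l _ do rewrite fct_sumE.
rewrite (@fsbigT_big _ _ _ _ _ _ b); last first.
  move=> i hik m hm; case: ifP => hkm; last by rewrite zerosE.
  apply/eqP; apply: contraLR hm => hnz; rewrite -ltnNge.
  by case: (lterm_act_neq0 hP hQ hik hkm hnz).
rewrite [RHS](@fsbigT_big _ _ _ _ _ _ b); last first.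
  move=> i hik l hl; apply/eqP; apply: contraLR hl => hnz; rewrite -ltnNge.
  move: hnz; rewrite scalesE mulf_eq0 negb_or => /andP[_ hnz].
  have := val_ge_neq0 (val_ge_smul (val_ge_smul (hP k) (val_ge_sderiv (i := i) (hQ l)))
     (val_ge0 (sderiv (l + (k - i))%MM f))) hnz.
  by have := lem_mdeg hik; lia.
apply: eq_bigr => i hik.
rewrite (eq_fsbigr (fun m => if (k - i <= m)%MM then
   smul (lterm P Q m k i) (sderiv m f) j else 0)); last by move=> m _; case: ifP.
rewrite -fsbigT_shift; apply: eq_fsbigr => l _.
by rewrite /lterm addmK smulZl.
Qed.

End Product.

Section Faithful.
Variables (K : fieldType) (n : nat).
Hypothesis K_char0 : has_char0 K.
Local Notation X := 'X_{1..n}.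
Local Notation series := (series K n).
Local Notation fsdo := (fsdo K n).
Implicit Types (f g h : series) (P Q R : fsdo).

Definition smono (k : X) : series := fun j => (j == k)%:R.

Lemma sderiv_smono k : sderiv k (smono k) = (mffact k k)%:R *: sone K n.
Proof.
apply/funext => r; rewrite sderivE scalesE /smono /sone.
have [->|hr] := eqVneq r 0%MM; first by rewrite add0m !eqxx mulr1.
rewrite (_ : ((r + k)%MM == k) = false) ?mulr0 //.
by apply/negbTE; apply: contra hr => /eqP h; apply/eqP/(@addIm _ k); rewrite add0m.
Qed.

Lemma sderiv_smono_small k k' : ~~ (k' <= k)%MM -> sderiv k' (smono k) = 0.
Proof.
move=> h; apply/funext => r; rewrite sderivE zerosE /smono.
by case: eqP => [e|]; [move: h; rewrite -e lem_addl | rewrite mulr0].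
Qed.

Lemma act_eq0 R : (forall f, act R f = 0) -> R = 0.
Proof.
move=> h0; suff H d k : (mdeg k < d)%N -> R k = 0.
  by apply/funext => k; apply: (H (mdeg k).+1).
elim: d k => [//|d IH] k hk; apply/funext => q.
have := congr1 (fun F => F q) (h0 (smono k)).
rewrite /= actE /lsum zerosE (@fsbigT_single _ _ _ k).
  have kk_neq0 : (mffact k k)%:R != 0 :> K.
    by rewrite (pcharf0P K).1 // -lt0n mffactnn_gt0.
  rewrite sderiv_smono smulZr smul1r scalesE => /eqP.
  by rewrite mulf_eq0 (negbTE kk_neq0) => /eqP.
move=> k' hne; have [hle|hnle] := boolP (k' <= k)%MM.
  by rewrite IH ?smul0l ?zerosE // (leq_trans (ltm_mdeg hle hne)) // -ltnS.
by rewrite sderiv_smono_small // smul0r zerosE.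
Qed.

Lemma act_inj P Q : in_S P -> in_S Q -> (forall f, act P f = act Q f) -> P = Q.
Proof.
move=> hP hQ h; apply/eqP; rewrite -subr_eq0; apply/eqP/act_eq0 => f.
by rewrite -scaleN1r (actDl hP (in_SZ _ hQ)) actZl h scaleN1r subrr.
Qed.

End Faithful.

Section Algebra.
Variables (K : fieldType) (n : nat).
Hypothesis K_char0 : has_char0 K.
Local Notation series := (series K n).
Local Notation fsdo := (fsdo K n).
Implicit Types (f g : series) (P Q R : fsdo).

Lemma dmulA P Q R : in_S P -> in_S Q -> in_S R ->
  dmul (dmul P Q) R = dmul P (dmul Q R).
Proof.
move=> hP hQ hR; have hPQ := in_S_dmul hP hQ; have hQR := in_S_dmul hQ hR.
apply: (act_inj K_char0 (in_S_dmul hPQ hR) (in_S_dmul hP hQR)) => // f.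
by rewrite !act_dmul.
Qed.

Lemma dmul1l P : in_S P -> dmul (done K n) P = P.
Proof.
move=> hP; have h1 := in_S_done K n.
by apply: (act_inj K_char0 (in_S_dmul h1 hP) hP) => f; rewrite act_dmul ?act_done.
Qed.

Lemma dmul1r P : in_S P -> dmul P (done K n) = P.
Proof.
move=> hP; have h1 := in_S_done K n.
by apply: (act_inj K_char0 (in_S_dmul hP h1) hP) => f; rewrite act_dmul ?act_done.
Qed.

Lemma dmulDl P Q R : in_S P -> in_S Q -> in_S R ->
  dmul (P + Q) R = dmul P R + dmul Q R.
Proof.
move=> hP hQ hR; have hPQ := in_SD hP hQ.
have hPR := in_S_dmul hP hR; have hQR := in_S_dmul hQ hR.
apply: (act_inj K_char0 (in_S_dmul hPQ hR) (in_SD hPR hQR)) => f.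
by rewrite act_dmul // (actDl hP hQ) (actDl hPR hQR) !act_dmul.
Qed.

Lemma dmulDr P Q R : in_S P -> in_S Q -> in_S R ->
  dmul R (P + Q) = dmul R P + dmul R Q.
Proof.
move=> hP hQ hR; have hPQ := in_SD hP hQ.
have hRP := in_S_dmul hR hP; have hRQ := in_S_dmul hR hQ.
apply: (act_inj K_char0 (in_S_dmul hR hPQ) (in_SD hRP hRQ)) => f.
by rewrite act_dmul // (actDl hP hQ) (actDr hR) (actDl hRP hRQ) !act_dmul.
Qed.

Lemma dmulZl c P Q : in_S P -> in_S Q -> dmul (c *: P) Q = c *: dmul P Q.
Proof.
move=> hP hQ; have hcP := in_SZ c hP.
apply: (act_inj K_char0 (in_S_dmul hcP hQ) (in_SZ c (in_S_dmul hP hQ))) => f.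
by rewrite act_dmul // !actZl act_dmul.
Qed.

Lemma dmulZr c P Q : in_S P -> in_S Q -> dmul P (c *: Q) = c *: dmul P Q.
Proof.
move=> hP hQ; have hcQ := in_SZ c hQ.
apply: (act_inj K_char0 (in_S_dmul hP hcQ) (in_SZ c (in_S_dmul hP hQ))) => f.
by rewrite act_dmul // !actZl (actZr hP) act_dmul.
Qed.

Lemma dmul_dcoef f g : dmul (dcoef f) (dcoef g) = dcoef (smul f g).
Proof.
have [hf hg] := (in_S_dcoef f, in_S_dcoef g).
apply: (act_inj K_char0 (in_S_dmul hf hg) (in_S_dcoef _)) => h.
by rewrite act_dmul // !act_dcoef smulA.
Qed.

Lemma dmul_dpartC (t s : 'I_n) : dmul (dpart K t) (dpart K s) = dmul (dpart K s) (dpart K t).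
Proof.
have [ht hs] := (in_S_dpart K t, in_S_dpart K s).
apply: (act_inj K_char0 (in_S_dmul ht hs) (in_S_dmul hs ht)) => // f.
by rewrite !act_dmul // !act_dpart -!sderivU !sderiv_comp addmC.
Qed.

Lemma dmul_dpart_dcoef (t : 'I_n) f :
  dmul (dpart K t) (dcoef f) = dmul (dcoef f) (dpart K t) + dcoef (pderiv t f).
Proof.
have [ht hf] := (in_S_dpart K t, in_S_dcoef f); have hft := in_S_dmul hf ht.
apply: (act_inj K_char0 (in_S_dmul ht hf) (in_SD hft (in_S_dcoef _))) => h.
rewrite (actDl hft (in_S_dcoef _)) !act_dmul //.
by rewrite !act_dpart !act_dcoef pderiv_smul.
Qed.

End Algebra.

Section ModuloM.
Variables (K : fieldType) (n : nat).
Local Notation X := 'X_{1..n}.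
Local Notation series := (series K n).
Local Notation fsdo := (fsdo K n).
Implicit Types (f g : series) (P Q : fsdo).

Lemma coef0_mpoly P : in_S P -> exists p : {mpoly K[n]}, forall k, p@_k = P k 0%MM.
Proof.
move=> /in_S_ord_le[c hP].
exists (\sum_(m <- mdeg_below n c.+1) P m 0%MM *: 'X_[m]) => k.
rewrite (big_morph (mcoeff k) (mcoeffD k) (mcoeff0 _ k)).
rewrite (eq_bigr (fun m => (m == k)%:R * P m 0%MM)); last first.
  by move=> m _; rewrite mcoeffZ mcoeffX mulrC.
rewrite big_mdeg_below_delta; case: ifP => // /negbT hk; symmetry; apply: hP.
by rewrite mdeg0; lia.
Qed.

Lemma mpoly_coef0 (p : {mpoly K[n]}) :
  exists2 P : fsdo, in_S P & forall k, P k 0%MM = p@_k.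
Proof.
exists (fun k j => (j == 0%MM)%:R * p@_k); last by move=> k; rewrite eqxx mul1r.
apply: (@ord_le_in_S _ _ _ (msize p)) => k j hj.
case: eqP => [hj0|_]; last by rewrite mul0r.
have hk : (msize p <= mdeg k)%N by move: hj; rewrite hj0 mdeg0; lia.
by rewrite mul1r; apply/eqP; rewrite mcoeff_eq0; exact: msize_mdeg_ge hk.
Qed.

Lemma val_ge_svar (t : 'I_n) : val_ge (svar K t) 1.
Proof.
move=> j hj; rewrite /svar; case: eqP => [hjt|_]; last by rewrite mulr0n.
by move: hj; rewrite hjt mdeg1; lia.
Qed.

Lemma in_m_val_ge f : in_m f -> val_ge f 1.
Proof.
case=> g ->; apply: val_ge_sum => t _.
by apply: (val_geW _ (val_ge_smul (val_ge_svar t) (val_ge0 (g t)))); lia.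
Qed.

Lemma in_S_lmul f Q : in_S Q -> in_S (lmul f Q).
Proof.
case=> N hQ; exists N => k.
by apply: (val_geW _ (val_ge_smul (val_ge0 f) (hQ k))); lia.
Qed.

Lemma in_mS_in_S P : in_mS P -> in_S P.
Proof.
case=> s [_ hS ->]; elim: s hS => [|x s IH] hS; first by rewrite big_nil; exact: in_S0.
rewrite big_cons; apply: in_SD; first by apply/in_S_lmul/hS/mem_head.
by apply: IH => y hy; apply: hS; rewrite inE hy orbT.
Qed.

Lemma in_mS_coef0 P : in_mS P -> forall k, P k 0%MM = 0.
Proof.
case=> s [hm _ ->] k; rewrite !fct_sumE big1_seq // => x /andP[_ hx].
rewrite /lmul; have := val_ge_smul (in_m_val_ge (hm x hx)) (val_ge0 (x.2 k)).
by move=> /(_ 0%MM) ->; rewrite ?mdeg0.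
Qed.

Lemma smul_svar (t : 'I_n) g j :
  smul (svar K t) g j = if (U_(t) <= j)%MM then g (j - U_(t))%MM else 0.
Proof.
rewrite (@smulE _ _ _ _ j (mdeg j).+1) // big_mkcond.
rewrite (eq_bigr (fun p => (p == U_(t)%MM)%:R
                           * (if (p <= j)%MM then g (j - p)%MM else 0))); last first.
  by move=> p _; rewrite /svar; case: ifP => _; rewrite ?mulr0.
rewrite big_mdeg_below_delta; case: ifP => // /negbT hB; case: ifP => // hU.
by move: hB; rewrite ltnS lem_mdeg.
Qed.

(* x_t^-1 times the part of P made of the monomials x^j whose first non-zero
   exponent is j_t *)
Definition xdiv P (t : 'I_n) : fsdo := fun k q =>
  if [forall s : 'I_n, (s < t)%N ==> (q s == 0%N)] then P k (q + U_(t))%MM else 0.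

Lemma in_S_xdiv P t : in_S P -> in_S (xdiv P t).
Proof.
case=> N hP; exists (N + 1) => k q hq; rewrite /xdiv; case: ifP => // _.
by apply: hP; rewrite mdegD mdeg1; lia.
Qed.

Lemma first_nonzero_exponent (j : X) : j != 0%MM ->
  exists t : 'I_n, forall s : 'I_n,
    ((j s != 0%N) && [forall u : 'I_n, (u < s)%N ==> (j u == 0%N)]) = (s == t).
Proof.
move=> hj; have [t1 ht1] : exists t1 : 'I_n, j t1 != 0%N.
  apply/existsP; apply: contraR hj => /existsPn hz; apply/eqP/mnmP => t.
  by have := hz t; rewrite negbK mnm0E => /eqP.
case: (@arg_minnP _ t1 (fun s : 'I_n => j s != 0%N) val ht1) => t0 h0t hmin.
exists t0 => s; apply/idP/eqP => [/andP[hjs /forallP hfs]|->]; last first.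
  rewrite h0t /=; apply/forallP => u; apply/implyP => hu.
  by apply/negPn/negP => /hmin; rewrite leqNgt hu.
apply/val_inj/eqP; rewrite eqn_leq hmin // andbT leqNgt; apply/negP => hlt.
by move: (hfs t0); rewrite hlt /= (negbTE h0t).
Qed.

Lemma lmul_svar_xdivE P (t : 'I_n) k (j : X) :
  lmul (svar K t) (xdiv P t) k j =
  if (j t != 0%N) && [forall u : 'I_n, (u < t)%N ==> (j u == 0%N)] then P k j else 0.
Proof.
rewrite /lmul smul_svar lep1mP; case: (boolP (j t != 0%N)) => //= hjt.
rewrite /xdiv submK ?lep1mP //; congr (if _ then _ else _).
apply: eq_forallb => u; case: (boolP (u < t)%N) => //= hut.
rewrite mnmBE mnm1E (_ : (t == u) = false) ?subn0 //.
by apply/negbTE; apply: contraTneq hut => ->; rewrite ltnn.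
Qed.

Lemma sum_svar_xdiv P : (forall k, P k 0%MM = 0) ->
  P = \sum_(t < n) lmul (svar K t) (xdiv P t).
Proof.
move=> h0; apply/funext => k; apply/funext => j; rewrite !fct_sumE.
have [->|hj] := eqVneq j 0%MM.
  by rewrite h0 big1 // => t _; rewrite /lmul smul_svar lep1mP mnm0E eqxx.
have [t0 ht0] := first_nonzero_exponent hj.
under eq_bigr => t _ do rewrite lmul_svar_xdivE ht0.
by rewrite -big_mkcond big_pred1_eq.
Qed.

Lemma coef0_in_mS P : in_S P -> (forall k, P k 0%MM = 0) -> in_mS P.
Proof.
move=> hP h0; exists [seq (svar K t, xdiv P t) | t <- index_enum 'I_n]; split.
- move=> x /mapP[t _ ->] /=; exists (fun s => if s == t then sone K n else 0).
  rewrite (bigD1 t) //= eqxx smul1r big1 ?addr0 // => s /negbTE ->.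
  exact: smul0r.
- by move=> x /mapP[t _ ->] /=; apply: in_S_xdiv.
- by rewrite big_map -sum_svar_xdiv.
Qed.

End ModuloM.

Section DiffOps.
Variables (K : fieldType) (n : nat).
Local Notation X := 'X_{1..n}.
Local Notation series := (series K n).
Local Notation fsdo := (fsdo K n).
Implicit Types (P Q : fsdo).

Lemma in_D_mdeg_below P : in_D P -> exists b, forall k, P k != 0 -> (mdeg k < b)%N.
Proof.
move/finite_seqP => [s hs]; exists (\max_(k <- s) (mdeg k).+1)%N => k hk.
have ks : k \in s by have : [set k | P k != 0]%classic k := hk; rewrite hs.
exact: (@leq_bigmax_seq _ s xpredT (fun k => (mdeg k).+1) k ks).
Qed.

Lemma in_D_in_S P : in_D P -> in_S P.
Proof.
move=> /in_D_mdeg_below [b hb]; apply: (@ord_le_in_S _ _ _ b) => k j hj.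
by have [->|/hb] := eqVneq (P k) 0 => //; lia.
Qed.

Lemma in_D_done : in_D (done K n).
Proof.
apply: (sub_finite_set _ (finite_set1 0%MM)) => k /=.
by rewrite /done; case: (eqVneq k 0%MM); rewrite ?eqxx.
Qed.

Lemma in_DD P Q : in_D P -> in_D Q -> in_D (P + Q).
Proof.
move=> hP hQ.
apply: (sub_finite_set (B := ([set k | P k != 0] `|` [set k | Q k != 0])%classic)).
  move=> k /=; have -> : (P + Q) k = P k + Q k by [].
  by have [->|hp] := eqVneq (P k) 0; [rewrite add0r; right | left].
by rewrite finite_setU.
Qed.

Lemma in_DZ c P : in_D P -> in_D (c *: P).
Proof.
move=> hP; apply: (sub_finite_set _ hP) => k /=.
have -> : (c *: P) k = c *: P k by [].
by apply: contra_neq => ->; rewrite scaler0.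
Qed.

Lemma in_D_dmul P Q : in_D P -> in_D Q -> in_D (dmul P Q).
Proof.
move=> /in_D_mdeg_below[bP hP] /in_D_mdeg_below[bQ hQ].
apply: (sub_finite_set _ (finite_seq (mdeg_below n (bP + bQ)))) => m /= hm.
have [j] : exists j, dmul P Q m j != 0.
  by apply: contra_neqP hm => /forallNP hm; apply/funext => j; apply/eqP/negPn/negP.
move=> /fsbig_neq0 [k _] /fsbig_neq0 [i /= /andP[hik hkm]].
rewrite /lterm scalesE mulf_eq0 negb_or => /andP[_ hnz].
have hk : P k != 0 by apply: contraNneq hnz => ->; rewrite smul0l.
have hl : Q (m - (k - i))%MM != 0 by apply: contraNneq hnz => ->; rewrite sderiv0r smul0r.
rewrite mem_mdeg_below; have := hP k hk; have := hQ _ hl.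
by have := mdeg_submK hkm; have := mdegB k i; lia.
Qed.

End DiffOps.

Theorem theorem5p3 (R : realType) (n : nat) :
  (* (1) S is a C-algebra for termwise +, *: and the Leibniz product,
         which is well defined on S; D is a subalgebra of S *)
  [/\
    [/\ forall P Q : fsdo R[i] n, in_S P -> in_S Q -> dmul_welldef P Q,
        in_S (0 : fsdo R[i] n) /\ in_S (done R[i] n),
        forall P Q : fsdo R[i] n, in_S P -> in_S Q -> in_S (P + Q),
        forall (c : R[i]) (P : fsdo R[i] n), in_S P -> in_S (c *: P) &
        forall P Q : fsdo R[i] n, in_S P -> in_S Q -> in_S (dmul P Q)],
    forall P Q T : fsdo R[i] n, in_S P -> in_S Q -> in_S T ->
      [/\ dmul (dmul P Q) T = dmul P (dmul Q T),
          dmul (done R[i] n) P = P /\ dmul P (done R[i] n) = P,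
          dmul (P + Q) T = dmul P T + dmul Q T,
          dmul T (P + Q) = dmul T P + dmul T Q &
          forall c : R[i], dmul (c *: P) Q = c *: dmul P Q /\
                           dmul P (c *: Q) = c *: dmul P Q],
    [/\ forall P : fsdo R[i] n, in_D P -> in_S P,
        in_D (done R[i] n),
        forall P Q : fsdo R[i] n, in_D P -> in_D Q -> in_D (P + Q),
        forall (c : R[i]) (P : fsdo R[i] n), in_D P -> in_D (c *: P) &
        forall P Q : fsdo R[i] n, in_D P -> in_D Q -> in_D (dmul P Q)] &
    (* on D the product is the usual one of differential operators *)
    [/\ forall f g : series R[i] n, dmul (dcoef f) (dcoef g) = dcoef (smul f g),
        forall t s : 'I_n, dmul (dpart R[i] t) (dpart R[i] s)
                           = dmul (dpart R[i] s) (dpart R[i] t) &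
        forall (t : 'I_n) (f : series R[i] n),
          dmul (dpart R[i] t) (dcoef f)
          = dmul (dcoef f) (dpart R[i] t) + dcoef (pderiv t f)]]
  /\
  (* (2) P |-> sum_k a_k(0) d^k induces S / mS ~= C[d_1,...,d_n] *)
  [/\ forall P : fsdo R[i] n, in_S P ->
        exists p : {mpoly R[i][n]}, forall k, p@_k = P k 0%MM,
      forall p : {mpoly R[i][n]},
        exists2 P : fsdo R[i] n, in_S P & forall k, P k 0%MM = p@_k,
      forall P : fsdo R[i] n, in_mS P -> in_S P &
      forall P : fsdo R[i] n, in_S P ->
        ((forall k, P k 0%MM = 0) <-> in_mS P)]
  /\
  (* (3) the natural action gives an injective algebra homomorphism
         S -> End^c_C(B^) extending the D-module structure of B^ *)
  [/\ forall P : fsdo R[i] n, in_S P ->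
        [/\ act_welldef P,
            forall (c : R[i]) (f g : series R[i] n),
              act P (c *: f + g) = c *: act P f + act P g &
            madic_continuous (act P)],
      forall f : series R[i] n, act (done R[i] n) f = f,
      forall P Q : fsdo R[i] n, in_S P -> in_S Q ->
        forall f : series R[i] n,
          [/\ act (P + Q) f = act P f + act Q f,
              forall c : R[i], act (c *: P) f = c *: act P f &
              act (dmul P Q) f = act P (act Q f)],
      forall P Q : fsdo R[i] n, in_S P -> in_S Q ->
        (forall f, act P f = act Q f) -> P = Q &
      forall f g : series R[i] n,
        act (dcoef g) f = smul g f /\
        forall t : 'I_n, act (dpart R[i] t) f = pderiv t f].
Proof.
have C_char0 : has_char0 R[i] := pchar_num _.
split; last split.
- split.
  + split; [move=> P Q hP _; exact: in_S_dmul_welldef hP | | exact: in_SD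
           | exact: in_SZ | exact: in_S_dmul].
    by split; [exact: in_S0 | exact: in_S_done].
  + move=> P Q T hP hQ hT; split.
    * exact: dmulA.
    * by split; [exact: dmul1l | exact: dmul1r].
    * exact: dmulDl.
    * exact: dmulDr.
    * by move=> c; split; [exact: dmulZl | exact: dmulZr].
  + split; [exact: in_D_in_S | exact: in_D_done | exact: in_DD | exact: in_DZ
           | exact: in_D_dmul].
  + split; [exact: dmul_dcoef | exact: dmul_dpartC | exact: dmul_dpart_dcoef].
- split; [exact: coef0_mpoly | exact: mpoly_coef0 | exact: in_mS_in_S |].
  by move=> P hP; split; [exact: coef0_in_mS | exact: in_mS_coef0].
- split.
  + move=> P hP; split; [exact: in_S_act_welldef | exact: act_linear | exact: act_continuous].
  + exact: act_done.
  + move=> P Q hP hQ f; split; [exact: actDl | move=> c; exact: actZl | exact: act_dmul].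
  + exact: act_inj.
  + by move=> f g; split; [exact: act_dcoef | move=> t; exact: act_dpart].
Qed.
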